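(* Let $\mathcal{C}$ be a BMZ-collection, $\mathcal{R}\in\mathbf{R}$, and $a\in C\setminus\{z\}$. Then there is exactly one $\mathcal{R}'\in\mathbf{R}$ with $\mathcal{R}'\neq\mathcal{R}$ and $\Phi(\mathcal{R}-z-a)\subseteq\Phi(\mathcal{R}'-z)$ (i.e., having $\operatorname{conv}(\Phi(\mathcal{R}-z-a))$ as a face), and it satisfies $\operatorname{csgn}(\mathcal{R}')=-\operatorname{csgn}(\mathcal{R})$.
   Context: Standing notation: $N=(d+1)(r-1)$; $w_1,\ldots,w_r\in\mathbb{R}^{r-1}$ the vertices of a regular $(r-1)$-simplex centered at $0$; $\varphi_i(x)=(x,1)\otimes w_i\in\mathbb{R}^N$; for an $r$-tuple $\mathcal{P}=(P_1,\ldots,P_r)$ of pairwise disjoint finite sets, $\Phi(\mathcal{P})=\bigcup_i\{\varphi_i(p):p\in P_i\}$. A BMZ-collection is $\mathcal{C}=(C_1,\ldots,C_{d+2})$, pairwise disjoint finite subsets of $\mathbb{R}^d$, $|C_1|=\cdots=|C_{d+1}|=r-1$, $C_{d+2}=\{z\}$; ground set $C=\{c_1,\ldots,c_{N+1}\}$, $c_{N+1}=z$, $C_k=\{c_{(k-1)(r-1)+1},\ldots,c_{k(r-1)}\}$ for $k\le d+1$. Rainbow $r$-partition: $r$-tuple $(R_1,\ldots,R_r)$ of pairwise disjoint subsets of $C$ with $|R_i\cap C_j|\le1$; maximal if it covers $C$. $\mathbf{R}$: maximal rainbow $r$-partitions with $z\in R_r$. $\mathcal{R}-a$: remove $a$ from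 its class. For $\mathcal{R}\in\mathbf{R}$ and $k\in[d+1]$, $\pi_k$ is the permutation of $[r]$ with $\pi_k(j)=i$ where $c_{(k-1)(r-1)+j}\in R_i$ ($j\in[r-1]$) and $\pi_k(r)$ the unique remaining index; $\operatorname{csgn}(\mathcal{R})=\prod_{k=1}^{d+1}\operatorname{sgn}\pi_k$. *)

From HB Require Import structures.
From mathcomp Require Import all_boot all_order all_algebra all_fingroup.
Set Implicit Arguments. Unset Strict Implicit. Unset Printing Implicit Defensive.
Import Order.TTheory GRing.Theory Num.Theory.

(* N = (d+1)(r-1); ground set C = {c_0,...,c_N} indexed by 'I_(N+1) (0-indexed),
   z = c_N is the last point. *)
Definition Nn (d r : nat) : nat := (d.+1 * r.-1)%N.

Definition gidx (d r : nat) := 'I_(Nn d r).+1.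

Definition zidx (d r : nat) : gidx d r := ord_max.

(* colour of index k: block k / (r-1) for k < N (colour classes C_1..C_{d+1}
   become 0..d), and colour d+1 for z (class C_{d+2} = {z}). *)
Definition colour (d r : nat) (k : gidx d r) : nat :=
  if (k < Nn d r)%N then (k %/ r.-1)%N else d.+1.

Definition colclass (d r : nat) (j : 'I_(d.+2)) : {set gidx d r} :=
  [set k : gidx d r | colour k == j].

(* an r-tuple of subsets of the ground set (classes 'I_r = R_1..R_r, 0-indexed) *)
Definition rtuple (d r : nat) := {ffun 'I_r -> {set gidx d r}}.

Definition rainbow (d r : nat) (P : rtuple d r) : Prop :=
  (forall i j : 'I_r, i != j -> [disjoint P i & P j]) /\
  (forall (i : 'I_r) (j : 'I_(d.+2)), (#|P i :&: @colclass d r j| <= 1)%N).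

Definition maximal_rainbow (d r : nat) (P : rtuple d r) : Prop :=
  rainbow P /\ \bigcup_(i < r) P i = [set: gidx d r].

Definition inbR (d r : nat) (P : rtuple d r) : Prop :=
  maximal_rainbow P /\ exists i : 'I_r, val i = r.-1 /\ zidx d r \in P i.

Definition rem_pt (d r : nat) (P : rtuple d r) (a : gidx d r) : rtuple d r :=
  [ffun i => P i :\ a].

Definition class_of (d r : nat) (P : rtuple d r) (x : gidx d r) (dflt : 'I_r) : 'I_r :=
  odflt dflt [pick i : 'I_r | x \in P i].

Definition blk_el (d r : nat) (k : 'I_(d.+1)) (j : nat) : gidx d r :=
  inord (k * r.-1 + j).

Definition pi_fun (d r : nat) (P : rtuple d r) (k : 'I_(d.+1)) (j : 'I_r) : 'I_r :=
  if (val j < r.-1)%N then class_of P (@blk_el d r k j) j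
  else odflt j [pick i : 'I_r |
                  [forall j' : 'I_r, (val j' < r.-1)%N ==>
                                     (class_of P (@blk_el d r k j') j' != i)]].

Definition sgn_fun (r : nat) (g : 'I_r -> 'I_r) : int :=
  match [pick s : {perm 'I_r} | [forall j, s j == g j]] with
  | Some s => (-1) ^+ odd_perm s
  | None => 0
  end.

Definition csgn (d r : nat) (P : rtuple d r) : int :=
  (\prod_(k < d.+1) sgn_fun (pi_fun P k))%R.

Definition sqdist (R : realFieldType) (n : nat) (u v : 'rV[R]_n) : R :=
  (\sum_(j < n) (u 0 j - v 0 j) ^+ 2)%R.

Definition regular_simplex_at0 (R : realFieldType) (r : nat)
    (w : 'I_r -> 'rV[R]_(r.-1)) : Prop :=
  (\sum_(i < r) w i = 0)%R /\
  exists s : R, (0 < s)%R /\ forall i j : 'I_r, i != j -> sqdist (w i) (w j) = s.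

(* phi_i(x) = (x,1) (x) w_i in R^((d+1)(r-1)), as the Kronecker product of the
   row vectors (x,1) and w_i (vectorised outer product) *)
Definition phi (R : realFieldType) (d r : nat) (x : 'rV[R]_d) (wi : 'rV[R]_(r.-1))
  : 'rV[R]_((d + 1) * r.-1) :=
  mxvec ((row_mx x (const_mx 1%R : 'rV[R]_1))^T *m wi).

Definition Phi (R : realFieldType) (d r : nat) (c : gidx d r -> 'rV[R]_d)
    (w : 'I_r -> 'rV[R]_(r.-1)) (P : rtuple d r) : 'rV[R]_((d + 1) * r.-1) -> Prop :=
  fun v => exists (i : 'I_r) (p : gidx d r), p \in P i /\ v = @phi R d r (c p) (w i).

Definition Phi_sub (R : realFieldType) (d r : nat) (c : gidx d r -> 'rV[R]_d)
    (w : 'I_r -> 'rV[R]_(r.-1)) (P Q : rtuple d r) : Prop :=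
  forall v, Phi c w P v -> Phi c w Q v.

From HB Require Import structures.
From mathcomp Require Import all_boot all_order all_algebra all_fingroup.
Import Order.TTheory GRing.Theory Num.Theory.

Set Implicit Arguments. Unset Strict Implicit. Unset Printing Implicit Defensive.

(** Since [phi] is injective on pairs (point, vertex), the inclusion
    [Phi(R - z - a) ⊆ Phi(R' - z)] says exactly that [R'] puts every point
    other than [a] and [z] in the same class as [R]; hence [R'] is determined by
    the class of [a].  If [a] has colour [k], it cannot join a class that
    already holds a point of colour [k]; the only admissible classes are the
    class of [a] itself (giving back [R]) and the unique class [m] missing
    colour [k].  Moving [a] into [m] changes the permutation [pi_k] by the
    transposition of the two classes and leaves every other [pi_k'] unchanged,
    so the colourful sign flips. *)

Section SimplexGeometry.
Local Open Scope ring_scope.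
Variable R : realFieldType.

Lemma phi_inj (d q : nat) (x1 x2 : 'rV[R]_d) (u1 u2 : 'rV[R]_q) :
  u1 != 0 -> phi (r:=q.+1) x1 u1 = phi (r:=q.+1) x2 u2 -> x1 = x2 /\ u1 = u2.
Proof.
move=> u1_neq0 /(can_inj mxvecK) E.
have Ent i j : (row_mx x1 (const_mx 1 : 'rV[R]_1)) 0 i * u1 0 j =
               (row_mx x2 (const_mx 1 : 'rV[R]_1)) 0 i * u2 0 j.
  have := congr1 (fun M : 'M[R]_(d + 1, q) => M i j) E.
  by rewrite !mxE !big_ord1 !mxE.
have Eu : u1 = u2.
  apply/matrixP=> i j; rewrite (ord1 i).
  by have := Ent (rshift d (0 : 'I_1)) j; rewrite !row_mxEr !mxE !mul1r.
split=> //; subst u2.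
have [j0 u1j0_neq0] : exists j0, u1 0 j0 != 0.
  apply/existsP; apply: contraNT u1_neq0; rewrite negb_exists => /forallP H.
  apply/eqP/matrixP=> i j; rewrite (ord1 i) mxE; exact/eqP/negPn/H.
apply/matrixP=> i j; rewrite (ord1 i).
by have := Ent (lshift 1 j) j0; rewrite !row_mxEl => /mulIf; apply.
Qed.

Definition dotv (n : nat) (u v : 'rV[R]_n) : R := \sum_(l < n) u 0 l * v 0 l.

Lemma sqdistE (n : nat) (u v : 'rV[R]_n) :
  sqdist u v = dotv u u + dotv v v - (dotv u v) *+ 2.
Proof.
rewrite /sqdist /dotv; under eq_bigr do rewrite sqrrB.
rewrite big_split /= sumrB sumrMnl addrAC.
by congr (_ + _ - _); apply: eq_bigr => l _; rewrite expr2.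
Qed.

Lemma dotv0 (n : nat) (u : 'rV[R]_n) : dotv u 0 = 0.
Proof. by rewrite /dotv big1 // => l _; rewrite mxE mulr0. Qed.

Lemma dotv_sumr (n m : nat) (u : 'rV[R]_n) (F : 'I_m -> 'rV[R]_n) :
  dotv u (\sum_k F k) = \sum_k dotv u (F k).
Proof.
rewrite /dotv exchange_big /=; apply: eq_bigr => l _.
by rewrite summxE mulr_sumr.
Qed.

Variables (q : nat) (w : 'I_q.+1 -> 'rV[R]_q).
Hypothesis w_simplex : regular_simplex_at0 w.

Lemma simplex_inj : injective w.
Proof.
have [_ [s [s_gt0 Hs]]] := w_simplex.
move=> i j wij; apply/eqP; apply: contraT => /Hs; rewrite wij /sqdist big1.
  by move=> s0; move: s_gt0; rewrite -s0 ltxx.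
by move=> l _; rewrite subrr expr0n.
Qed.

(* If [w i = 0], the other vertices have pairwise products [s/2 > 0] and norms
   [s], so [w j0] would have positive product with [\sum_k w k = 0]. *)
Lemma simplex_neq0 : (0 < q)%N -> forall i, w i != 0.
Proof.
have [sum0 [s [s_gt0 Hs]]] := w_simplex.
move=> q_gt0 i; apply/negP => /eqP wi0.
pose j0 : 'I_q.+1 := if i == ord0 then ord_max else ord0.
have j0i : j0 != i.
  rewrite /j0; case: (eqVneq i ord0) => [->|ne]; last by rewrite eq_sym.
  by rewrite -val_eqE /= -lt0n.
have norm_s j : j != i -> dotv (w j) (w j) = s.
  by move=> ji; have := Hs j i ji; rewrite sqdistE wi0 !dotv0 mul0rn subr0 addr0.
have dot_s j k : j != i -> k != i -> j != k -> dotv (w j) (w k) *+ 2 = s.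
  move=> ji ki jk; move/eqP: (Hs j k jk); rewrite sqdistE norm_s // norm_s //.
  by rewrite subr_eq addrC => /eqP /addrI.
have : \sum_k dotv (w j0) (w k) *+ 2 = 0.
  by rewrite sumrMnl -dotv_sumr sum0 dotv0 mul0rn.
rewrite (bigD1 j0) //= norm_s //.
have ge0 : 0 <= \sum_(k | k != j0) dotv (w j0) (w k) *+ 2.
  apply: sumr_ge0 => k kj0; case: (eqVneq k i) => [->|ki].
    by rewrite wi0 dotv0 mul0rn.
  by rewrite dot_s // ?(ltW s_gt0) // eq_sym.
move=> E; have : 0 < s *+ 2 + \sum_(k | k != j0) dotv (w j0) (w k) *+ 2.
  by apply: ltr_wpDr => //; rewrite mulrn_wgt0.
by rewrite E ltxx.
Qed.

Lemma phi_simplex_inj (d : nat) (x1 x2 : 'rV[R]_d) (i j : 'I_q.+1) :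
  (0 < q)%N -> phi (r:=q.+1) x1 (w i) = phi (r:=q.+1) x2 (w j) -> x1 = x2 /\ i = j.
Proof.
move=> q_gt0 /(phi_inj (simplex_neq0 q_gt0 i)) [-> /simplex_inj ->]; by split.
Qed.

End SimplexGeometry.

Lemma gidx0_z (d : nat) (a : gidx d 0) : a = zidx d 0.
Proof.
apply: val_inj; have : (val a < (d.+1 * 0).+1)%N := ltn_ord a.
by rewrite muln0 ltnS leqn0 => /eqP ->; rewrite /= /Nn muln0.
Qed.

Lemma ltn_ord_maxE (n : nat) (j : 'I_n.+1) : (j < n)%N = (j != ord_max).
Proof. by rewrite -val_eqE /= ltn_neqAle -ltnS ltn_ord andbT. Qed.

Section Colours.
Variables d r : nat.
Local Notation T := (gidx d r.+1).
Local Notation z := (zidx d r.+1).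

Lemma ltn_Nn (x : T) : x != z -> (x < Nn d r.+1)%N.
Proof. by rewrite ltn_neqAle -ltnS ltn_ord andbT; apply: contra => /eqP E; apply/eqP/val_inj. Qed.

Lemma r_gt0 (x : T) : x != z -> (0 < r)%N.
Proof. by move/ltn_Nn; move: (val x) => n; rewrite /Nn /=; case: r => //; rewrite muln0. Qed.

Lemma colourE (x : T) : x != z -> colour x = (x %/ r)%N.
Proof. by move=> xz; rewrite /colour ltn_Nn. Qed.

Lemma colour_z : colour z = d.+1.
Proof. by rewrite /colour /= ltnn. Qed.

Lemma colour_lt (x : T) : x != z -> (colour x < d.+1)%N.
Proof. by move=> xz; rewrite colourE // ltn_divLR ?(r_gt0 xz) //; exact: ltn_Nn. Qed.

Lemma colour_ltS (x : T) : (colour x < d.+2)%N.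
Proof.
by case: (eqVneq x z) => [->|/colour_lt]; [rewrite colour_z | exact: ltnW].
Qed.

Section Block.
Variables (k : 'I_d.+1) (j : nat).
Hypothesis jr : (j < r)%N.

Lemma blk_el_ltn : (k * r + j < Nn d r.+1)%N.
Proof.
apply: leq_trans (_ : k.+1 * r <= _)%N; first by rewrite mulSn addnC ltn_add2r.
by rewrite /Nn /= leq_mul2r ltn_ord orbT.
Qed.

Lemma blk_elE : val (blk_el r.+1 k j) = (k * r + j)%N.
Proof. by rewrite /blk_el /= inordK // ltnS ltnW // blk_el_ltn. Qed.

Lemma colour_blk_el : colour (blk_el r.+1 k j) = k.
Proof.
rewrite /colour blk_elE blk_el_ltn divnMDl; last by case: r jr.
by rewrite divn_small // addn0.
Qed.

End Block.

Lemma blk_el_inj (k : 'I_d.+1) (j1 j2 : nat) : (j1 < r)%N -> (j2 < r)%N ->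
  blk_el r.+1 k j1 = blk_el r.+1 k j2 -> j1 = j2.
Proof. by move=> j1r j2r /(congr1 val); rewrite !blk_elE //; exact: addnI. Qed.

Lemma colour_blk_elP (x : T) (k : 'I_d.+1) : x != z -> colour x = k ->
  exists2 j : 'I_r.+1, j != ord_max & x = blk_el r.+1 k j.
Proof.
move=> xz xk; have r_pos := r_gt0 xz.
have xr : (x %% r < r)%N by rewrite ltn_pmod.
exists (Ordinal (leqW xr)); first by rewrite -ltn_ord_maxE.
by apply: val_inj; rewrite blk_elE // -xk colourE // -divn_eq.
Qed.

End Colours.

Section Partitions.
Variables d r : nat.
Local Notation T := (gidx d r.+1).
Local Notation z := (zidx d r.+1).
Implicit Types (P Q : rtuple d r.+1) (x y : T) (i j : 'I_r.+1).

Section InbR.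
Variables (P : rtuple d r.+1) (hP : inbR P).

Lemma inbR_cover x : exists i, x \in P i.
Proof.
have [[_ cover] _] := hP; have : x \in \bigcup_(i < r.+1) P i by rewrite cover inE.
by case/bigcupP => i _ xi; exists i.
Qed.

Lemma inbR_classI x i j : x \in P i -> x \in P j -> i = j.
Proof.
have [[[disj _] _] _] := hP; move=> xi xj; apply/eqP; apply: contraT => ij.
by rewrite (disjointFr (disj i j ij) xi) in xj.
Qed.

Lemma inbR_rainbow x y i : x \in P i -> y \in P i -> colour x = colour y -> x = y.
Proof.
have [[[_ rainbow] _] _] := hP; move=> xi yi cxy.
have /card_le1_eqP := rainbow i (Ordinal (colour_ltS x)).
by apply; rewrite !inE ?xi ?yi /= ?cxy.
Qed.

Lemma inbR_z i : (z \in P i) = (i == ord_max).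
Proof.
have [_ [i0 [/eqP i0_max z_i0]]] := hP.
have i0E : i0 = ord_max by apply/eqP; rewrite -val_eqE.
rewrite i0E in z_i0; apply/idP/eqP => [zi | -> //]; exact: inbR_classI zi z_i0.
Qed.

Lemma class_ofE x i dflt : x \in P i -> class_of P x dflt = i.
Proof.
rewrite /class_of => xi; case: pickP => [i' xi' /= |/(_ i)]; last by rewrite xi.
exact: inbR_classI xi' xi.
Qed.

Lemma mem_class_of x dflt : x \in P (class_of P x dflt).
Proof. by have [i xi] := inbR_cover x; rewrite (class_ofE _ xi). Qed.

End InbR.

Lemma inbR_intro Q :
  (forall x i j, x \in Q i -> x \in Q j -> i = j) ->
  (forall x y i, x \in Q i -> y \in Q i -> colour x = colour y -> x = y) ->
  (forall x, exists i, x \in Q i) -> z \in Q ord_max -> inbR Q.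
Proof.
move=> disj rainbow cover zQ; split; last by exists ord_max.
split; last first.
  apply/setP => x; rewrite inE; have [i xi] := cover x; apply/bigcupP; by exists i.
split=> [i j ij | i j].
  rewrite -setI_eq0; apply/eqP/setP => x; rewrite !inE.
  by apply/negP => /andP [xi xj]; move: ij; rewrite (disj _ _ _ xi xj) eqxx.
apply/card_le1_eqP => x y; rewrite !inE => /andP [xi /eqP cx] /andP [yi /eqP cy].
by apply: (rainbow _ _ i) => //; rewrite cx cy.
Qed.

Lemma inbR_eq_off P Q a i : inbR P -> inbR Q ->
  (forall j x, x != a -> x \in P j -> x \in Q j) -> a \in P i -> a \in Q i -> P = Q.
Proof.
move=> hP hQ agree aPi aQi.
have PQ j x : x \in P j -> x \in Q j.
  by case: (eqVneq x a) => [-> /(inbR_classI hP aPi) <- // | /agree]; apply.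
apply/ffunP => j; apply/setP => x; apply/idP/idP => [|xQ]; first exact: PQ.
have [j' xP] := inbR_cover hP x.
by rewrite (inbR_classI hQ xQ (PQ _ _ xP)).
Qed.

Lemma sgn_funE (g : 'I_r.+1 -> 'I_r.+1) (s : {perm 'I_r.+1}) :
  s =1 g -> sgn_fun g = ((-1) ^+ odd_perm s)%R.
Proof.
rewrite /sgn_fun => sg; case: pickP => [s' /forallP s'g|/(_ s)].
  by have -> : s' = s by apply/permP => j; rewrite sg; exact/eqP.
by move/forallP; case=> j; rewrite sg.
Qed.

Section ColourfulPermutation.
Variables (P : rtuple d r.+1) (hP : inbR P) (k : 'I_d.+1).
Local Notation f := (pi_fun P k).

Lemma pi_funE j : j != ord_max -> f j = class_of P (blk_el r.+1 k j) j.
Proof. by rewrite /pi_fun -ltn_ord_maxE => ->. Qed.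

Lemma pi_fun_blk j : j != ord_max -> blk_el r.+1 k j \in P (f j).
Proof. by move=> jm; rewrite pi_funE //; exact: mem_class_of. Qed.

Lemma pi_fun_inj_blk j1 j2 : j1 != ord_max -> j2 != ord_max -> f j1 = f j2 -> j1 = j2.
Proof.
move=> j1m j2m f12; have := pi_fun_blk j1m; rewrite f12 => /(inbR_rainbow hP).
move=> /(_ _ (pi_fun_blk j2m)); rewrite !colour_blk_el ?ltn_ord_maxE //.
by move=> /(_ erefl) /blk_el_inj; rewrite !ltn_ord_maxE => /(_ j1m j2m) /val_inj.
Qed.

(* The [r-1] points of colour [k] lie in [r-1] distinct classes, so some class
   is missed; [f ord_max] picks one. *)
Lemma pi_fun_max_neq j : j != ord_max -> f j != f ord_max.
Proof.
move=> jm; pose g j' := class_of P (blk_el r.+1 k j') j'.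
have [i Hi] : exists i, [forall j' : 'I_r.+1, (val j' < r.+1.-1)%N ==> (g j' != i)].
  apply/existsP; apply: contraT; rewrite negb_exists => /forallP H.
  have sub : [set: 'I_r.+1] \subset g @: [set~ ord_max].
    apply/subsetP => i _; have := H i; rewrite negb_forall => /existsP [j'].
    rewrite negb_imply negbK => /andP [j'r /eqP <-].
    by apply: imset_f; rewrite !inE -ltn_ord_maxE.
  have := leq_trans (subset_leq_card sub) (leq_imset_card _ _).
  by rewrite cardsT cardsC1 card_ord ltnn.
rewrite /pi_fun /= ltnn; case: pickP => [i' /forallP Hi'|/(_ i)]; last by rewrite Hi.
by have := Hi' j; rewrite /= ltn_ord_maxE jm.
Qed.

Lemma pi_fun_inj : injective f.
Proof.
move=> j1 j2 f12.
case: (eqVneq j1 ord_max) => [e1|n1]; case: (eqVneq j2 ord_max) => [e2|n2].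
- by rewrite e1 e2.
- by have := pi_fun_max_neq n2; rewrite -f12 e1 eqxx.
- by have := pi_fun_max_neq n1; rewrite f12 e2 eqxx.
- exact: pi_fun_inj_blk.
Qed.

Lemma pi_fun_perm : exists s : {perm 'I_r.+1}, s =1 f.
Proof. by exists (perm pi_fun_inj); apply: permE. Qed.

Lemma pi_fun_ext (s : {perm 'I_r.+1}) :
  (forall j, j != ord_max -> s j = f j) -> s =1 f.
Proof.
move=> sf j; case: (eqVneq j ord_max) => [->|]; last exact: sf.
pose j0 := (s^-1)%g (f ord_max); have sj0 : s j0 = f ord_max by rewrite permKV.
case: (eqVneq j0 ord_max) => [j0E|j0m]; first by rewrite -{1}j0E.
have fj0 : f j0 = f ord_max by rewrite -sf.
by rewrite (pi_fun_inj fj0) eqxx in j0m.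
Qed.

Lemma colour_in_class i : i != f ord_max ->
  exists2 j : 'I_r.+1, j != ord_max & blk_el r.+1 k j \in P i.
Proof.
have [s sf] := pi_fun_perm; move=> im; pose j := (s^-1)%g i.
have fj : f j = i by rewrite -sf permKV.
have jm : j != ord_max by apply: contra im => /eqP jm; rewrite -fj jm.
by exists j; rewrite // -fj pi_fun_blk.
Qed.

Lemma colour_notin_pi_fun_max x : x \in P (f ord_max) -> colour x != k.
Proof.
move=> xm; apply/negP => /eqP xk.
case: (eqVneq x z) => [xz|xz].
  by have := ltn_ord k; rewrite -xk xz colour_z ltnn.
have [j jm xE] := colour_blk_elP xz xk; rewrite xE in xm.
by move/(inbR_classI hP (pi_fun_blk jm))/eqP: xm; apply/negP/pi_fun_max_neq.
Qed.

End ColourfulPermutation.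

Lemma mem_rem_pt P a x i : (x \in rem_pt P a i) = (x != a) && (x \in P i).
Proof. by rewrite ffunE !inE. Qed.

Section MovePoint.
Variables (P : rtuple d r.+1) (a : T) (m : 'I_r.+1).

Definition move_to : rtuple d r.+1 := [ffun i => if i == m then a |: P i else P i :\ a].

Lemma mem_move_to x i : (x \in move_to i) = (if x == a then i == m else x \in P i).
Proof.
rewrite ffunE; case: (eqVneq x a) => [->|xa]; case: (eqVneq i m) => [->|im];
  by rewrite !inE ?eqxx ?(negPf xa).
Qed.

Lemma inbR_move_to : inbR P -> a != z ->
  (forall y, y \in P m -> colour y != colour a) -> inbR move_to.
Proof.
move=> hP az m_no_a; apply: inbR_intro.
- move=> x i j; rewrite !mem_move_to; case: (x == a); first by move=> /eqP -> /eqP ->.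
  exact: inbR_classI.
- move=> x y i; rewrite !mem_move_to.
  case: (eqVneq x a) => [->|xa]; case: (eqVneq y a) => [->|ya] //.
  + by move=> /eqP -> /m_no_a ya' ca; rewrite ca eqxx in ya'.
  + by move=> xi /eqP im ca; have := m_no_a x; rewrite -im ca eqxx xi => /(_ isT).
  + exact: inbR_rainbow.
- move=> x; case: (eqVneq x a) => [->|xa]; first by exists m; rewrite mem_move_to !eqxx.
  by have [i xi] := inbR_cover hP x; exists i; rewrite mem_move_to (negPf xa).
- by rewrite mem_move_to eq_sym (negPf az) (inbR_z hP).
Qed.

Lemma move_to_neq : a \notin P m -> move_to <> P.
Proof. by move=> /negP aPm moveP; apply: aPm; rewrite -moveP mem_move_to !eqxx. Qed.

Lemma class_of_move_to x dflt : x != a -> class_of move_to x dflt = class_of P x dflt.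
Proof.
move=> xa; congr (odflt _ _); apply: eq_pick => i /=.
by rewrite mem_move_to (negPf xa).
Qed.

Lemma pi_fun_move_to (k : 'I_d.+1) : colour a != k -> pi_fun move_to k =1 pi_fun P k.
Proof.
move=> ak j; have class_blk (j' : 'I_r.+1) : (j' < r)%N ->
    class_of move_to (blk_el r.+1 k j') j' = class_of P (blk_el r.+1 k j') j'.
  move=> j'r; apply: class_of_move_to; apply: contra ak => /eqP <-.
  by rewrite colour_blk_el.
rewrite /pi_fun /=; case: ifP => jr; first exact: class_blk.
congr (odflt _ _); apply: eq_pick => i /=; apply: eq_forallb => j'.
by case: (ltnP j' r) => //= j'r; rewrite class_blk.
Qed.

Lemma Phi_sub_move_to (R : realFieldType) (c : T -> 'rV[R]_d) (w : 'I_r.+1 -> 'rV[R]_r) :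
  Phi_sub c w (rem_pt (rem_pt P z) a) (rem_pt move_to z).
Proof.
move=> v [i [p [pi ->]]]; exists i, p; split => //.
move: pi; rewrite !mem_rem_pt mem_move_to => /and3P [pa pz ppi].
by rewrite pz (negPf pa).
Qed.

End MovePoint.

Lemma Phi_sub_classes (R : realFieldType) (c : T -> 'rV[R]_d) (w : 'I_r.+1 -> 'rV[R]_r)
    (P Q : rtuple d r.+1) (a : T) :
  injective c -> regular_simplex_at0 w -> a != z ->
  Phi_sub c w (rem_pt (rem_pt P z) a) (rem_pt Q z) ->
  forall i x, x != z -> x != a -> x \in P i -> x \in Q i.
Proof.
move=> c_inj w_simplex az PQ i x xz xa xi.
have [i' [p [pi' E]]] : Phi c w (rem_pt Q z) (phi (r:=r.+1) (c x) (w i)).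
  by apply: PQ; exists i, x; rewrite !mem_rem_pt xa xz.
have [/c_inj px ii'] := phi_simplex_inj w_simplex (r_gt0 az) E.
by move: pi'; rewrite mem_rem_pt -px -ii' => /andP [].
Qed.

Section MoveToMissingClass.
Variables (P : rtuple d r.+1) (hP : inbR P) (a : T) (az : a != z).

Let k : 'I_d.+1 := Ordinal (colour_lt az).
Let m := pi_fun P k ord_max.
Let ia := class_of P a ord0.

Definition move_to_missing := move_to P a m.
Local Notation P' := move_to_missing.

Lemma a_in_class : a \in P ia.
Proof. exact: mem_class_of. Qed.

Lemma a_notin_missing : a \notin P m.
Proof. by apply/negP => /(colour_notin_pi_fun_max hP)/negP; apply. Qed.

Lemma class_neq_missing : ia != m.
Proof. by apply: contraNneq a_notin_missing => <-; exact: a_in_class. Qed.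

Lemma inbR_move_to_missing : inbR P'.
Proof. by apply: inbR_move_to => // y /(colour_notin_pi_fun_max hP). Qed.

Lemma move_to_missing_neq : P' <> P.
Proof. exact/move_to_neq/a_notin_missing. Qed.

Lemma pi_fun_move_to_missing (s : {perm 'I_r.+1}) :
  s =1 pi_fun P k -> (s * tperm ia m)%g =1 pi_fun P' k.
Proof.
move=> sf; apply: (pi_fun_ext inbR_move_to_missing) => j jm.
rewrite permM sf (pi_funE P' k jm).
have bj := pi_fun_blk hP k jm.
case: (eqVneq (blk_el r.+1 k j) a) => [ba|ba].
  rewrite ba in bj *; rewrite (inbR_classI hP bj a_in_class) tpermL.
  by symmetry; apply: (class_ofE inbR_move_to_missing); rewrite mem_move_to !eqxx.
rewrite class_of_move_to // -pi_funE // tpermD //; last first.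
  by rewrite eq_sym pi_fun_max_neq.
apply: contra ba => /eqP fj; rewrite -fj in bj; apply/eqP.
by apply: (inbR_rainbow hP bj a_in_class); rewrite colour_blk_el // ltn_ord_maxE.
Qed.

Lemma csgn_move_to_missing : csgn P' = (- csgn P)%R.
Proof.
have [s sf] := pi_fun_perm hP k.
rewrite /csgn (bigD1 k) //= [in RHS](bigD1 k) //=.
rewrite (sgn_funE (pi_fun_move_to_missing sf)) (sgn_funE sf).
have -> : (\prod_(k' < d.+1 | k' != k) sgn_fun (pi_fun P' k') =
           \prod_(k' < d.+1 | k' != k) sgn_fun (pi_fun P k'))%R.
  apply: eq_bigr => k' k'k; have [s' s'f] := pi_fun_perm hP k'.
  rewrite (sgn_funE s'f); apply: sgn_funE => j; rewrite s'f pi_fun_move_to //.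
  by apply: contra k'k => /eqP ak; apply/eqP/val_inj.
by rewrite odd_permM odd_tperm class_neq_missing signr_addb expr1 mulrN1 mulNr.
Qed.

Lemma move_to_missing_unique Q : inbR Q -> Q <> P ->
  (forall i x, x != z -> x != a -> x \in P i -> x \in Q i) -> Q = P'.
Proof.
move=> hQ QP PQ.
have agree j x : x != a -> x \in P j -> x \in Q j.
  case: (eqVneq x z) => [-> _|]; last exact: PQ.
  by rewrite (inbR_z hP) (inbR_z hQ).
have [i0 aQ] := inbR_cover hQ a.
case: (eqVneq i0 m) => [i0m|i0m].
  symmetry; apply: (inbR_eq_off (a := a) (i := m) inbR_move_to_missing hQ).
  - by move=> j x xa; rewrite mem_move_to (negPf xa); exact: agree.
  - by rewrite mem_move_to !eqxx.
  - by rewrite -i0m.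
have [j jm bi0] := colour_in_class hP i0m.
case: (eqVneq (blk_el r.+1 k j) a) => [ba|ba].
  rewrite ba in bi0; rewrite (inbR_classI hP bi0 a_in_class) in aQ.
  by case: QP; symmetry; exact: inbR_eq_off hP hQ agree a_in_class aQ.
have := inbR_rainbow hQ (agree _ _ ba bi0) aQ.
by rewrite colour_blk_el ?ltn_ord_maxE // => /(_ erefl)/eqP; rewrite (negPf ba).
Qed.

End MoveToMissingClass.

End Partitions.

Theorem lemma8 (R : realFieldType) (d r : nat)
  (c : gidx d r -> 'rV[R]_d) (w : 'I_r -> 'rV[R]_(r.-1))
  (hc : injective c) (hw : regular_simplex_at0 w)
  (P : rtuple d r) (hP : inbR P) (a : gidx d r) (ha : a != zidx d r) :
  exists P' : rtuple d r,
    (inbR P' /\ P' <> P /\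
     Phi_sub c w (rem_pt (rem_pt P (zidx d r)) a) (rem_pt P' (zidx d r))) /\
    (forall P'' : rtuple d r,
       inbR P'' /\ P'' <> P /\
       Phi_sub c w (rem_pt (rem_pt P (zidx d r)) a) (rem_pt P'' (zidx d r)) ->
       P'' = P') /\
    csgn P' = (- csgn P)%R.
Proof.
move: c w hc hw P hP a ha; case: r => [|r] c w hc hw P hP a ha.
  by rewrite (gidx0_z a) eqxx in ha.
exists (move_to_missing P ha); split; [split; [|split] | split].
- exact: inbR_move_to_missing.
- exact: move_to_missing_neq.
- exact: Phi_sub_move_to.
- move=> Q [hQ [QP PQ]]; apply: move_to_missing_unique => //.
  exact: Phi_sub_classes hc hw ha PQ.
- exact: csgn_move_to_missing.
Qed.
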